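(* Let $q$ be a prime power, let $V = V(4,q)$ be the $4$-dimensional vector space over $\mathrm{GF}(q)$, and let $X$ be the set of $2$-dimensional subspaces (lines) of $V$, so $|X| = (q^2+1)(q^2+q+1)$. Let $Y \subseteq X$ be such that its characteristic function $f_Y$ has degree at most $1$, and write $|Y| = x(q^2+q+1)$ (with $x$ a real number; in fact an integer). Then for every $1$-dimensional subspace $P$ and every $3$-dimensional subspace $H$ of $V$ with $P \subseteq H$, $$x = |\{ L \in Y : P \subseteq L\}| + |\{ L \in Y : L \subseteq H\}| - (q+1)\,|\{L \in Y : P \subseteq L \subseteq H\}|.$$
   Context: For a $1$-dimensional subspace $P$ of $V$, let $x_P\colon X \to \{0,1\}$ be defined by $x_P(L) = 1$ if $P \subseteq L$ and $x_P(L) = 0$ otherwise. A function $f\colon X \to \mathbb{R}$ has degree at most $1$ if it can be written as $f = c + \sum_P c_P x_P$ (sum over all $1$-dimensional subspaces $P$ of $V$) for real constants $c, c_P$. The characteristic function $f_Y$ of $Y \subseteq X$ takes value $1$ on $Y$ and $0$ elsewhere. (Equivalently, $\deg f \le 1$ means $f$ lies in the sum of the first two eigenspaces $V_0 + V_1$ of the Grassmann scheme $J_q(4,2)$ in its standard cometric (Q-polynomial) ordering.) *)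

(* Subspaces of V = F^4 (F a finite field, q = #|F|) are
   represented canonically by square matrices A : 'M[F]_4 with <<A>>%MS = A
   (the canonical generator of a row space), so they form a finite type. *)
From HB Require Import structures.
From mathcomp Require Import all_boot all_order all_algebra.
From mathcomp Require Import reals.
Set Implicit Arguments. Unset Strict Implicit. Unset Printing Implicit Defensive.
Import Order.TTheory GRing.Theory Num.Theory.
Local Open Scope ring_scope.

Definition subsp (F : finFieldType) (k : nat) : {set 'M[F]_4} :=
  [set A : 'M[F]_4 | (\rank A == k)%N && (<<A>>%MS == A)].

Definition xP (R : realType) (F : finFieldType) (P L : 'M[F]_4) : R :=
  ((P <= L)%MS)%:R.

Definition charf (R : realType) (F : finFieldType) (Y : {set 'M[F]_4})
  (L : 'M[F]_4) : R := (L \in Y)%:R.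

Definition deg_le1 (R : realType) (F : finFieldType) (f : 'M[F]_4 -> R) : Prop :=
  exists (c : R) (cP : 'M[F]_4 -> R),
    forall L, L \in subsp F 2 ->
      f L = c + \sum_(P in subsp F 1) cP P * xP R P L.

From HB Require Import structures.
From mathcomp Require Import all_boot all_order all_algebra.
From mathcomp Require Import ring.
From mathcomp Require Import reals.
Set Implicit Arguments. Unset Strict Implicit. Unset Printing Implicit Defensive.
Import Order.TTheory GRing.Theory Num.Theory.
Local Open Scope ring_scope.

(* Expanding f_Y = c + sum_P c_P x_P and summing over a set S of lines gives
   |Y /\ S| = c |S| + sum_P c_P |{L in S | P <= L}|.  For S = all lines, the lines
   through P, the lines in H and the lines through P in H, the incidence numbers
   depend on the point P' only through [P' = P] and [P' <= H], so each count is an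
   explicit combination of c, sum c_P, c_P and sum_(P' <= H) c_P'.  In
   |Y_P| + |Y_H| - (q + 1) |Y_(P,H)| the last two cancel, leaving
   c (q^2 + 1) + sum c_P, which is |Y| / (q^2 + q + 1) = x. *)

Lemma card_uniform_fibres (T U : finType) (A : {set T}) (B : {set U}) (f : T -> U) k :
  {in A, forall x, f x \in B} ->
  {in B, forall y, #|[set x in A | f x == y]| = k} ->
  #|A| = (#|B| * k)%N.
Proof.
move=> fAB fibre; rewrite -sum1_card (partition_big f (mem B)) //=.
rewrite -sum1_card big_distrl /=; apply: eq_bigr => y yB.
by rewrite mul1n -(fibre y yB) -sum1_card; apply: eq_bigl => x; rewrite inE.
Qed.

Lemma double_count (T U : finType) (A : {set T}) (B : {set U}) (r : T -> U -> bool) :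
  (\sum_(a in A) #|[set b in B | r a b]| = \sum_(b in B) #|[set a in A | r a b]|)%N.
Proof.
have card_sum (V : finType) (C : {set V}) (s : pred V) :
    #|[set v in C | s v]| = (\sum_(v in C) s v)%N.
  rewrite -sum1_card big_mkcond [RHS]big_mkcond; apply: eq_bigr => v _.
  by rewrite inE; case: (v \in C); case: (s v).
under eq_bigr do rewrite card_sum.
by under [RHS]eq_bigr do rewrite card_sum; rewrite exchange_big.
Qed.

Lemma card_set1_cond (T : finType) (a : T) (p : pred T) : #|[set x in [set a] | p x]| = p a.
Proof.
case pa: (p a) => /=; [rewrite -(cards1 a) | rewrite -(cards0 T)]; apply: eq_card => x.
  by rewrite !inE andb_idr // => /eqP->.
by rewrite !inE; case: eqP => // ->; rewrite pa.
Qed.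

Section Subspaces.
Variable F : finFieldType.
Local Notation q := #|F|.
Local Notation points := (subsp F 1).
Local Notation lines := (subsp F 2).

Lemma card_rows_submx n m (W : 'M[F]_(m, n)) :
  #|[set v : 'rV[F]_n | (v <= W)%MS]| = (q ^ \rank W)%N.
Proof.
have -> : [set v : 'rV[F]_n | (v <= W)%MS] = [set u *m row_base W | u : 'rV_(\rank W)].
  apply/setP => v; rewrite inE -(eq_row_base W); apply/submxP/imsetP => [[u ->]|[u _ ->]];
    by exists u.
by rewrite card_imset ?card_mx ?mul1n //; apply: row_free_inj (row_base_free W).
Qed.

Lemma card_rows_submx_diff n m1 m2 (U : 'M[F]_(m1, n)) (W : 'M[F]_(m2, n)) :
  (U <= W)%MS ->
  #|[set v : 'rV[F]_n | (v <= W)%MS && ~~ (v <= U)%MS]|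
    = (q ^ \rank U * (q ^ (\rank W - \rank U)).-1)%N.
Proof.
move=> sUW; have [vU vW] := (card_rows_submx U, card_rows_submx W).
have -> : [set v : 'rV[F]_n | (v <= W)%MS && ~~ (v <= U)%MS] =
    [set v | (v <= W)%MS] :\: [set v | (v <= U)%MS].
  by apply/setP => v; rewrite !inE andbC.
rewrite cardsD vW (setIidPr _) ?vU; last first.
  by apply/subsetP => v; rewrite !inE => /submx_trans->.
rewrite -subn1 mulnBr muln1 -expnD subnKC //; exact: mxrankS.
Qed.

Lemma mxrank_adds_leq1 n m1 m2 (U : 'M[F]_(m1, n)) (V : 'M[F]_(m2, n)) :
  (\rank V <= 1)%N -> ~~ (V <= U)%MS -> \rank (U + V)%MS = (\rank U).+1.
Proof.
move=> rV sVU; apply/anti_leq/andP; split.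
  rewrite -[(\rank U).+1]addn1; apply: leq_trans (leq_of_leqif (mxrank_adds_leqif U V)) _.
  by rewrite leq_add2l.
apply: rank_ltmx; rewrite ltmxE addsmxSl /=.
by apply: contra sVU; apply: submx_trans (addsmxSr U V).
Qed.

Lemma subsp_rank k A : A \in subsp F k -> \rank A = k.
Proof. by rewrite inE => /andP[/eqP]. Qed.

Lemma genmx_subsp k (A : 'M[F]_4) : \rank A = k -> <<A>>%MS \in subsp F k.
Proof. by move=> rA; rewrite inE mxrank_gen rA genmx_id !eqxx. Qed.

Lemma subsp_eq k A B : A \in subsp F k -> B \in subsp F k -> (A <= B)%MS -> A = B.
Proof.
rewrite !inE => /andP[/eqP rA /eqP gA] /andP[/eqP rB /eqP gB] sAB.
have /genmxP eqAB : (A == B)%MS by rewrite -(eq_leqif (mxrank_leqif_eq sAB)) rA rB.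
by rewrite -gA eqAB gB.
Qed.

(* Every (k+1)-space S between U and W is <<U + v>> for exactly the q^(k+1) - q^k
   vectors v of S outside U. *)
Lemma card_subsp_between k (U W : 'M[F]_4) : \rank U = k -> (U <= W)%MS ->
  #|[set S in subsp F k.+1 | (U <= S)%MS && (S <= W)%MS]|
    = (\sum_(i < \rank W - k) q ^ i)%N.
Proof.
move=> rU sUW; set between := [set S in _ | _].
have := card_rows_submx_diff sUW; rewrite rU predn_exp.
pose span_with (v : 'rV[F]_4) := <<(U + v)%MS>>%MS.
rewrite (@card_uniform_fibres _ _ _ between span_with (q ^ k * q.-1)).
- have q_gt1 : (1 < q)%N := card_finNzRing_gt1 F.
  rewrite [in RHS]mulnA [in RHS]mulnC => /eqP; rewrite eqn_pmul2r => [/eqP //|].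
  by rewrite muln_gt0 expn_gt0 (ltnW q_gt1) -subn1 subn_gt0.
- move=> v; rewrite !inE => /andP[vW vU].
  rewrite mxrank_gen mxrank_adds_leq1 ?rank_leq_row // rU genmx_id !eqxx !genmxE addsmxSl.
  by rewrite addsmx_sub sUW.
move=> S; rewrite /between !inE => /andP[/andP[/eqP rS gS] /andP[sUS sSW]].
have := card_rows_submx_diff sUS; rewrite rU rS subSnn expn1 => <-.
apply: eq_card => v; rewrite !inE; apply/andP/andP => [[/andP[_ vU] /eqP <-]|[vS vU]].
  by rewrite genmxE addsmxSr.
split; first by rewrite (submx_trans vS sSW).
apply/eqP/(@subsp_eq k.+1); last by rewrite genmxE addsmx_sub sUS.
  by apply: genmx_subsp; rewrite mxrank_adds_leq1 ?rank_leq_row // rU.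
by rewrite inE rS gS eqxx.
Qed.

Lemma card_points_submx (W : 'M[F]_4) :
  #|[set P in points | (P <= W)%MS]| = (\sum_(i < \rank W) q ^ i)%N.
Proof.
rewrite -[\rank W]subn0 -(card_subsp_between (mxrank0 F 4 4) (sub0mx 4 W)).
by apply: eq_card => P; rewrite !inE sub0mx.
Qed.

Lemma card_lines_through_submx P (W : 'M[F]_4) : P \in points -> (P <= W)%MS ->
  #|[set L in lines | (P <= L)%MS && (L <= W)%MS]| = (\sum_(i < \rank W - 1) q ^ i)%N.
Proof. by move=> /subsp_rank rP; apply: card_subsp_between. Qed.

Lemma card_points_line L : L \in lines -> #|[set P in points | (P <= L)%MS]| = q.+1.
Proof.
by move=> /subsp_rank rL; rewrite card_points_submx rL !big_ord_recr big_ord0 /=; ring.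
Qed.

Lemma card_lines_submx (W : 'M[F]_4) n :
  {in points, forall P, (P <= W)%MS ->
     #|[set L in lines | (P <= L)%MS && (L <= W)%MS]| = n} ->
  (#|[set L in lines | (L <= W)%MS]| * q.+1
     = #|[set P in points | (P <= W)%MS]| * n)%N.
Proof.
move=> linesP; rewrite -!sum_nat_const.
have := double_count [set L in lines | (L <= W)%MS] [set P in points | (P <= W)%MS]
  (fun L P => (P <= L)%MS).
congr (_ = _); apply: eq_bigr.
  move=> L; rewrite inE => /andP[Ll sLW]; rewrite -(card_points_line Ll).
  apply: eq_card => P; rewrite !inE.
  by case sPL: (P <= L)%MS; rewrite ?andbF // (submx_trans sPL sLW) !andbT.
move=> P; rewrite inE => /andP[Pp sPW]; rewrite -(linesP P Pp sPW).
apply: eq_card => L; rewrite !inE.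
by case: (P <= L)%MS; case: (L <= W)%MS; rewrite ?andbT ?andbF.
Qed.

Lemma card_lines_through P : P \in points ->
  #|[set L in lines | (P <= L)%MS]| = (q ^ 2 + q + 1)%N.
Proof.
move=> Pp; transitivity #|[set L in lines | (P <= L)%MS && (L <= 1%:M)%MS]|.
  by apply: eq_card => L; rewrite !inE submx1 andbT.
by rewrite card_lines_through_submx ?submx1 // mxrank1 !big_ord_recr big_ord0 /=; ring.
Qed.

Lemma card_lines_through_submx3 P H : P \in points -> H \in subsp F 3 -> (P <= H)%MS ->
  #|[set L in lines | (P <= L)%MS && (L <= H)%MS]| = q.+1.
Proof.
move=> Pp /subsp_rank rH sPH.
by rewrite card_lines_through_submx // rH !big_ord_recr big_ord0 /=; ring.
Qed.

Lemma card_lines_submx3 H : H \in subsp F 3 ->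
  #|[set L in lines | (L <= H)%MS]| = (q ^ 2 + q + 1)%N.
Proof.
move=> Hs; apply/eqP; rewrite -(eqn_pmul2r (ltn0Sn q)).
rewrite (@card_lines_submx H q.+1) => [|P Pp]; last exact: card_lines_through_submx3.
by rewrite card_points_submx (subsp_rank Hs) !big_ord_recr big_ord0 /=; apply/eqP; ring.
Qed.

Lemma card_lines : #|lines| = ((q ^ 2 + 1) * (q ^ 2 + q + 1))%N.
Proof.
have all_submx1 k : [set S in subsp F k | (S <= 1%:M)%MS] = subsp F k.
  by apply/setP => S; rewrite !inE submx1 andbT.
apply/eqP; rewrite -(eqn_pmul2r (ltn0Sn q)) -(all_submx1 2).
rewrite (@card_lines_submx 1%:M (q ^ 2 + q + 1)) => [|P Pp _]; last first.
  by rewrite -(card_lines_through Pp); apply: eq_card => L; rewrite !inE submx1 andbT.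
by rewrite card_points_submx mxrank1 !big_ord_recr big_ord0 /=; apply/eqP; ring.
Qed.

Lemma lines_through_points P P' : P \in points -> P' \in points -> P' != P ->
  [set L in lines | (P <= L)%MS && (P' <= L)%MS] = [set <<(P + P')%MS>>%MS].
Proof.
move=> Pp P'p neqP'P.
have sP'P : ~~ (P' <= P)%MS by apply: contra neqP'P => /(subsp_eq P'p Pp)->.
have PP'l : <<(P + P')%MS>>%MS \in lines.
  by apply: genmx_subsp; rewrite mxrank_adds_leq1 ?(subsp_rank Pp) ?(subsp_rank P'p).
apply/setP => L; rewrite in_set in_set1; apply/idP/eqP => [/andP[Ll /andP[sPL sP'L]]|->].
  by apply/esym/(subsp_eq PP'l Ll); rewrite genmxE addsmx_sub sPL.
by rewrite PP'l !genmxE addsmxSl addsmxSr.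
Qed.

Lemma card_lines_through_points P : P \in points -> {in points, forall P',
  #|[set L in lines | (P <= L)%MS && (P' <= L)%MS]| = (1 + (q ^ 2 + q) * (P' == P))%N}.
Proof.
move=> Pp P' P'p; case: eqVneq => [->|neqP'P]; last first.
  by rewrite lines_through_points // cards1 muln0.
transitivity #|[set L in lines | (P <= L)%MS]|.
  by apply: eq_card => L; rewrite !inE andbb.
by rewrite card_lines_through // muln1; ring.
Qed.

Lemma card_lines_submx3_through H : H \in subsp F 3 -> {in points, forall P',
  #|[set L in lines | (L <= H)%MS && (P' <= L)%MS]| = (q.+1 * (P' <= H)%MS)%N}.
Proof.
move=> Hs P' P'p; case: (boolP (P' <= H)%MS) => [sP'H|nsP'H]; last first.
  rewrite muln0; apply: eq_card0 => L; rewrite in_set.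
  by apply: (contraNF _ nsP'H) => /andP[_ /andP[sLH sP'L]]; apply: submx_trans sLH.
rewrite muln1 -(card_lines_through_submx3 P'p Hs sP'H).
by apply: eq_card => L; rewrite !inE (andbC (L <= H)%MS).
Qed.

Lemma card_lines_through_submx3_through P H :
  P \in points -> H \in subsp F 3 -> (P <= H)%MS -> {in points, forall P',
  #|[set L in lines | (P <= L)%MS && (L <= H)%MS && (P' <= L)%MS]|
    = (q * (P' == P) + (P' <= H)%MS)%N}.
Proof.
move=> Pp Hs sPH P' P'p; case: eqVneq => [->|neqP'P].
  rewrite sPH muln1 addn1 -(card_lines_through_submx3 Pp Hs sPH).
  by apply: eq_card => L; rewrite !inE; case: (P <= L)%MS; rewrite ?andbT ?andbF.
have -> : [set L in lines | (P <= L)%MS && (L <= H)%MS && (P' <= L)%MS]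
    = [set L in [set L in lines | (P <= L)%MS && (P' <= L)%MS] | (L <= H)%MS].
  apply/setP => L; rewrite !inE.
  by case: (P <= L)%MS; case: (L <= H)%MS; case: (P' <= L)%MS; rewrite ?andbT ?andbF.
rewrite lines_through_points // muln0 add0n card_set1_cond.
by rewrite genmxE addsmx_sub sPH.
Qed.

End Subspaces.

Section Sums.
Variables (R : numDomainType) (T : finType).

Lemma sum1_setId (A : {set T}) (Q : pred T) :
  \sum_(x in A | Q x) (1 : R) = #|[set x in A | Q x]|%:R.
Proof. by rewrite -sum1_card natr_sum; apply: eq_bigl => x; rewrite inE. Qed.

Lemma sum_indicator (A : {set T}) (Q p : pred T) :
  \sum_(x in A | Q x) (p x)%:R = #|[set x in A | Q x && p x]|%:R :> R.
Proof.
rewrite -(@sum1_setId A (fun x => Q x && p x)) big_mkcond [RHS]big_mkcond.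
apply: eq_bigr => x _.
by case: (x \in A); case: (Q x); case: (p x).
Qed.

Lemma sum_weight_delta (S : {set T}) (w : T -> R) (t : T) :
  t \in S -> \sum_(s in S) w s * (s == t)%:R = w t.
Proof.
move=> tS; rewrite (bigD1 t) //= eqxx mulr1 big1 ?addr0 // => s /andP[_ /negbTE->].
by rewrite mulr0.
Qed.

Lemma sum_weight_indicator (S : {set T}) (w : T -> R) (D : pred T) :
  \sum_(s in S) w s * (D s)%:R = \sum_(s in S | D s) w s.
Proof.
by rewrite big_mkcondr; apply: eq_bigr => s _; case: (D s); rewrite ?mulr1 ?mulr0.
Qed.

End Sums.

Section DegreeOne.
Variables (R : realType) (F : finFieldType).
Local Notation points := (subsp F 1).
Local Notation lines := (subsp F 2).

Lemma sum_charf (Y X : {set 'M[F]_4}) (Q : pred 'M[F]_4) : Y \subset X ->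
  \sum_(L in X | Q L) charf R Y L = #|[set L in Y | Q L]|%:R.
Proof.
move=> sYX; rewrite (@sum_indicator R _ X Q (fun L => L \in Y)); congr (_ %:R).
apply: eq_card => L.
rewrite !inE; case: (boolP (L \in Y)) => [LY|]; last by rewrite !andbF.
by rewrite (subsetP sYX _ LY) andbT.
Qed.

Lemma sum_deg_le1 (X PS : {set 'M[F]_4}) (f : 'M[F]_4 -> R) c cP (Q : pred 'M[F]_4) :
  {in X, forall L, f L = c + \sum_(P in PS) cP P * xP R P L} ->
  \sum_(L in X | Q L) f L
    = c * #|[set L in X | Q L]|%:R
      + \sum_(P in PS) cP P * #|[set L in X | Q L && (P <= L)%MS]|%:R.
Proof.
move=> fE; transitivity (\sum_(L in X | Q L) (c * 1 + \sum_(P in PS) cP P * xP R P L)).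
  by apply: eq_bigr => L /andP[/fE-> _]; rewrite mulr1.
rewrite big_split /= -mulr_sumr sum1_setId exchange_big /=; congr (_ + _).
by apply: eq_bigr => P _; rewrite -mulr_sumr (@sum_indicator R _ X Q (fun L => (P <= L)%MS)).
Qed.

Variables (Y : {set 'M[F]_4}) (c : R) (cP : 'M[F]_4 -> R).
Hypothesis sYlines : Y \subset lines.
Hypothesis charfY :
  {in lines, forall L, charf R Y L = c + \sum_(P in points) cP P * xP R P L}.

Lemma card_deg_le1_incident (Q : pred 'M[F]_4) (m : nat) (g : 'M[F]_4 -> nat) :
  #|[set L in lines | Q L]| = m ->
  {in points, forall P, #|[set L in lines | Q L && (P <= L)%MS]| = g P} ->
  #|[set L in Y | Q L]|%:R = c * m%:R + \sum_(P in points) cP P * (g P)%:R.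
Proof.
move=> <- counts; rewrite -(sum_charf Q sYlines) (sum_deg_le1 _ charfY).
by congr (_ + _); apply: eq_bigr => P /counts->.
Qed.

Local Notation q := #|F|.

Lemma card_deg_le1_all :
  #|Y|%:R = c * ((q ^ 2 + 1) * (q ^ 2 + q + 1))%:R
            + (q ^ 2 + q + 1)%:R * \sum_(P in points) cP P.
Proof.
rewrite -[Y in LHS]setIT -setIdE.
rewrite (card_deg_le1_incident (m := (q ^ 2 + 1) * (q ^ 2 + q + 1))
  (g := fun=> (q ^ 2 + q + 1)%N)).
- by rewrite mulr_sumr; congr (_ + _); apply: eq_bigr => P _; rewrite mulrC.
- by rewrite setIdE setIT card_lines.
- exact: card_lines_through.
Qed.

Lemma card_deg_le1_through P : P \in points ->
  #|[set L in Y | (P <= L)%MS]|%:R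
    = c * (q ^ 2 + q + 1)%:R + \sum_(P' in points) cP P' + (q ^ 2 + q)%:R * cP P.
Proof.
move=> Pp; rewrite (card_deg_le1_incident (card_lines_through Pp)
  (card_lines_through_points Pp)).
under eq_bigr do rewrite natrD natrM mulrDr mulr1 mulrCA.
by rewrite big_split /= -mulr_sumr sum_weight_delta // addrA.
Qed.

Lemma card_deg_le1_submx3 H : H \in subsp F 3 ->
  #|[set L in Y | (L <= H)%MS]|%:R
    = c * (q ^ 2 + q + 1)%:R + q.+1%:R * \sum_(P in points | (P <= H)%MS) cP P.
Proof.
move=> Hs; rewrite (card_deg_le1_incident (card_lines_submx3 Hs)
  (card_lines_submx3_through Hs)).
under eq_bigr do rewrite natrM mulrCA.
by rewrite -mulr_sumr sum_weight_indicator.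
Qed.

Lemma card_deg_le1_through_submx3 P H : P \in points -> H \in subsp F 3 -> (P <= H)%MS ->
  #|[set L in Y | (P <= L)%MS && (L <= H)%MS]|%:R
    = c * q.+1%:R + q%:R * cP P + \sum_(P' in points | (P' <= H)%MS) cP P'.
Proof.
move=> Pp Hs sPH; rewrite (card_deg_le1_incident (card_lines_through_submx3 Pp Hs sPH)
  (card_lines_through_submx3_through Pp Hs sPH)).
under eq_bigr do rewrite natrD natrM mulrDr mulrCA.
by rewrite big_split /= -mulr_sumr sum_weight_delta // sum_weight_indicator addrA.
Qed.

End DegreeOne.

Unset Implicit Arguments.

Theorem mainTheorem2 (R : realType) (F : finFieldType)
  (Y : {set 'M[F]_4}) (x : R) :
  Y \subset subsp F 2 ->
  deg_le1 (charf R Y) ->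
  (#|Y|%:R : R) = x * ((#|F| ^ 2 + #|F| + 1)%N)%:R ->
  forall P H : 'M[F]_4, P \in subsp F 1 -> H \in subsp F 3 -> (P <= H)%MS ->
    x = (#|[set L in Y | (P <= L)%MS]|%:R : R)
        + (#|[set L in Y | (L <= H)%MS]|%:R)
        - (#|F|.+1)%:R * (#|[set L in Y | (P <= L)%MS && (L <= H)%MS]|%:R).
Proof.
move=> sYlines [c [cP charfY]] cardY P H Pp Hs sPH.
have x_eq : x = c * (#|F| ^ 2 + 1)%:R + \sum_(P' in subsp F 1) cP P'.
  have N_neq0 : (#|F| ^ 2 + #|F| + 1)%:R != 0 :> R by rewrite pnatr_eq0 addn1.
  by apply: (mulIf N_neq0); rewrite -cardY (card_deg_le1_all sYlines charfY); ring.
rewrite (card_deg_le1_through sYlines charfY Pp) (card_deg_le1_submx3 sYlines charfY Hs).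
rewrite (card_deg_le1_through_submx3 sYlines charfY Pp Hs sPH) x_eq; ring.
Qed.
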